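(* For all even $n\ge6$ with $\mathbf{s}=\mathbf{n}_{n/2}$, and for all odd $n=2m+1\ge7$ with $\mathbf{s}\in\{\mathbf{n}_m,\mathbf{n}_{m+1},\mathbf{n}_{m,m+1}\}$, $$|\lambda_{n,2,\mathbf{s}}|\le e^{-n}\quad\text{and}\quad|\lambda_{n,4,\mathbf{s}}|\le\tfrac12e^{-n}.$$ Moreover, for all odd $n=2m+1\ge7$, $$|\overline{\lambda}_{n,2,\mathbf{n}_m}|\le e^{-n}\quad\text{and}\quad|\overline{\lambda}_{n,4,\mathbf{n}_m}|\le\tfrac12e^{-n}.$$
   Context: With $(n)_t=n(n-1)\cdots(n-t+1)$, $\lambda_{n,b,s}=\sum_{t=0}^b\binom bt(-2)^t\frac{(s)_t}{(n)_t}$ and, for a vector $\mathbf{s}=(s_1,\dots,s_k)$, $\lambda_{n,b,\mathbf{s}}=\prod_{r=1}^k\lambda_{n,b,s_r}$. Let $\mathbf{n}=(1,2,\dots,n)$; $\mathbf{n}_l$ denotes $\mathbf{n}$ with its $l$-th component deleted, and $\mathbf{n}_{m,m+1}$ denotes $\mathbf{n}$ with components $m$ and $m+1$ deleted. For $n=2m+1$, $\overline{\lambda}_{n,b,\mathbf{n}_m}=\Big(\prod_{s\in\{1,\dots,n\}\setminus\{m,m+1\}}\lambda_{n,b,s}\Big)\cdot\tfrac12(\lambda_{n,b,m}+\lambda_{n,b,m+1})=\tfrac12(\lambda_{n,b,\mathbf{n}_m}+\lambda_{n,b,\mathbf{n}_{m+1}})$. *)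

From Stdlib Require Import Reals List Arith.
Import ListNotations.
Open Scope R_scope.

Fixpoint ffall (x : R) (t : nat) : R :=
  match t with
  | O => 1
  | S t' => ffall x t' * (x - INR t')
  end.

Definition lam (n b s : nat) : R :=
  fold_right Rplus 0
    (map (fun t => C b t * (-2) ^ t * (ffall (INR s) t / ffall (INR n) t))
         (seq 0 (S b))).

Definition lamv (n b : nat) (ss : list nat) : R :=
  fold_right Rmult 1 (map (lam n b) ss).

Definition nvec (n : nat) : list nat := seq 1 n.

(* delete the component equal to l (= the l-th component of nvec n) *)
Definition del (l : nat) (ss : list nat) : list nat :=
  filter (fun i => negb (Nat.eqb i l)) ss.

Definition lambar (n b m : nat) : R :=
  (lamv n b (del m (nvec n)) + lamv n b (del (m + 1) (nvec n))) / 2.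

(* For b = 2, 4 the sum defining lambda_{n,b,s} collapses to a polynomial in d = n - 2s
   divided by (n)_b, so it is invariant under s |-> n - s and equals 1 at s = 0 and s = n.
   Hence the factors of each product pair up: with h = floor(n/2) and
   Q = prod_{s=1}^{h-1} lambda_{n,b,s}, the product is Q^2 times a factor of modulus at most 1.
   Bounding |lambda_{n,b,s}| by the majorant y_s obtained by making every sign positive, and
   pairing s with h - s, gives Q^2 <= prod_s y_s y_{h-s}; by AM-GM this is at most 12^(1-h) as
   soon as the mean of the y_s y_{h-s} is at most 1/12. That mean is an explicit rational
   function of h (sums of powers), and for h >= 12 the inequality is a polynomial identity in
   h - 12 with nonnegative coefficients. As 2 * 12^(1-h) <= (4/11)^(2h+1) <= e^(-n) for h >= 12,
   only 6 <= n <= 23 remain, and these are checked in exact integer arithmetic. *)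

From Stdlib Require Import Reals List Arith Lra Lia Psatz ZArith.
Import ListNotations.
Open Scope R_scope.

Definition rprod (f : nat -> R) (l : list nat) : R := fold_right Rmult 1 (map f l).
Definition rsum (f : nat -> R) (l : list nat) : R := fold_right Rplus 0 (map f l).

Lemma rprod_single f a : rprod f [a] = f a.
Proof. unfold rprod; simpl; ring. Qed.

Lemma rprod_app f l1 l2 : rprod f (l1 ++ l2) = rprod f l1 * rprod f l2.
Proof.
  unfold rprod; induction l1 as [|a l1 IH]; simpl; [ring|].
  rewrite IH; ring.
Qed.

Lemma rprod_ext f g l : (forall x, In x l -> f x = g x) -> rprod f l = rprod g l.
Proof.
  unfold rprod; induction l as [|a l IH]; intros H; simpl; [reflexivity|].
  f_equal; [apply H; now left | apply IH; intros x Hx; apply H; now right].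
Qed.

Lemma rprod_mult f g l : rprod (fun x => f x * g x) l = rprod f l * rprod g l.
Proof.
  unfold rprod; induction l as [|a l IH]; simpl; [ring|].
  rewrite IH; ring.
Qed.

Lemma Rabs_rprod f l : Rabs (rprod f l) = rprod (fun x => Rabs (f x)) l.
Proof.
  unfold rprod; induction l as [|a l IH]; simpl; [apply Rabs_R1|].
  rewrite Rabs_mult, IH; reflexivity.
Qed.

Lemma rprod_nonneg f l : (forall x, In x l -> 0 <= f x) -> 0 <= rprod f l.
Proof.
  unfold rprod; induction l as [|a l IH]; intros H; simpl; [lra|].
  apply Rmult_le_pos; [apply H; now left | apply IH; intros x Hx; apply H; now right].
Qed.

Lemma rprod_le f g l : (forall x, In x l -> 0 <= f x <= g x) -> rprod f l <= rprod g l.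
Proof.
  induction l as [|a l IH]; intros H; [unfold rprod; simpl; lra|].
  assert (Hl : forall x, In x l -> 0 <= f x <= g x) by (intros x Hx; apply H; now right).
  change (f a * rprod f l <= g a * rprod g l).
  apply Rmult_le_compat; [apply H; now left | | apply H; now left | now apply IH].
  apply rprod_nonneg; intros x Hx; apply Hl, Hx.
Qed.

Lemma rprod_div f D l : D <> 0 -> rprod (fun x => f x / D) l = rprod f l / D ^ length l.
Proof.
  intros HD; unfold rprod; induction l as [|a l IH]; simpl; [field|].
  rewrite IH; field; split; [apply pow_nonzero|]; assumption.
Qed.

Lemma rprod_seq_reflect f c a len : (a + len <= S c)%nat ->
  rprod f (seq a len) = rprod (fun s => f (c - s)%nat) (seq (S c - a - len) len).
Proof.
  revert a; induction len as [|len IH]; intros a H; [reflexivity|].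
  change (rprod f (seq a (S len))) with (f a * rprod f (seq (S a) len)).
  rewrite IH, seq_S, rprod_app, rprod_single by lia.
  replace (c - (S c - a - S len + len))%nat with a by lia.
  replace (S c - S a - len)%nat with (S c - a - S len)%nat by lia.
  ring.
Qed.

Lemma rsum_ext f g l : (forall x, In x l -> f x = g x) -> rsum f l = rsum g l.
Proof.
  unfold rsum; induction l as [|a l IH]; intros H; simpl; [reflexivity|].
  f_equal; [apply H; now left | apply IH; intros x Hx; apply H; now right].
Qed.

Lemma rsum_div f D l : D <> 0 -> rsum (fun x => f x / D) l = rsum f l / D.
Proof.
  intros HD; unfold rsum; induction l as [|a l IH]; simpl; [field; assumption|].
  rewrite IH; field; assumption.
Qed.

Lemma rsum_telescope (g G : R -> R) a len : (forall x, G (x + 1) - G x = g x) ->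
  rsum (fun s => g (INR s)) (seq a len) = G (INR (a + len)) - G (INR a).
Proof.
  intros HG; revert a; induction len as [|len IH]; intros a.
  - rewrite Nat.add_0_r; unfold rsum; simpl; ring.
  - change (g (INR a) + rsum (fun s => g (INR s)) (seq (S a) len)
            = G (INR (a + S len)) - G (INR a)).
    rewrite IH, <- HG, <- S_INR.
    replace (a + S len)%nat with (S a + len)%nat by lia; ring.
Qed.

Lemma exp_le x y : x <= y -> exp x <= exp y.
Proof.
  intros [Hlt | ->]; [left; apply exp_increasing, Hlt | right; reflexivity].
Qed.

(* AM-GM in the form: each factor satisfies [x <= c e^(x/c - 1)]. *)
Lemma rprod_le_pow_exp c f l : 0 < c -> (forall x, In x l -> 0 <= f x) ->
  rprod f l <= c ^ length l * exp (rsum f l / c - INR (length l)).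
Proof.
  intros Hc; induction l as [|a l IH]; intros H.
  - unfold rprod, rsum; simpl; unfold Rdiv; rewrite Rmult_0_l, Rminus_0_r, exp_0; lra.
  - assert (Hl : forall x, In x l -> 0 <= f x) by (intros x Hx; apply H; now right).
    assert (Ha : f a <= c * exp (f a / c - 1)).
    { pose proof (exp_ineq1_le (f a / c - 1)).
      replace (f a) with (c * (f a / c)) at 1 by (field; lra).
      apply Rmult_le_compat_l; lra. }
    change (f a * rprod f l <= c * c ^ length l
              * exp ((f a + rsum f l) / c - INR (S (length l)))).
    replace ((f a + rsum f l) / c - INR (S (length l)))
      with ((f a / c - 1) + (rsum f l / c - INR (length l))) by (rewrite S_INR; field; lra).
    rewrite exp_plus.
    replace (c * c ^ length l * (exp (f a / c - 1) * exp (rsum f l / c - INR (length l))))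
      with ((c * exp (f a / c - 1)) * (c ^ length l * exp (rsum f l / c - INR (length l))))
      by ring.
    apply Rmult_le_compat; [apply H; now left | now apply rprod_nonneg | exact Ha | now apply IH].
Qed.

Lemma del_app k l1 l2 : del k (l1 ++ l2) = del k l1 ++ del k l2.
Proof. apply filter_app. Qed.

Lemma del_notin k l : ~ In k l -> del k l = l.
Proof.
  unfold del; induction l as [|a l IH]; intros Hk; simpl; [reflexivity|].
  destruct (Nat.eqb_spec a k) as [-> | _]; [now destruct Hk; left|].
  simpl; f_equal; apply IH; intros Hl; apply Hk; now right.
Qed.

Lemma del_seq a len k : (a <= k < a + len)%nat ->
  del k (seq a len) = seq a (k - a) ++ seq (S k) (a + len - S k).
Proof.
  intros Hk.
  replace len with ((k - a) + S (a + len - S k))%nat at 1 by lia.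
  rewrite seq_app; unfold del; rewrite filter_app; fold (del k (seq a (k - a))).
  replace (a + (k - a))%nat with k by lia.
  simpl; rewrite Nat.eqb_refl; simpl; fold (del k (seq (S k) (a + len - S k))).
  rewrite !del_notin; [reflexivity | |]; intros Hin; apply in_seq in Hin; lia.
Qed.

(* With [d = n - 2 s], [lam n b s = lam_num b n d / lam_den b n] for [b = 2, 4];
   [lam_maj] makes every sign of [lam_num] positive, so it bounds [|lam_num|]. *)
Definition lam_num (b : nat) (n d : R) : R :=
  match b with
  | 2%nat => d ^ 2 - n
  | _ => d ^ 4 - (6 * n - 8) * d ^ 2 + 3 * n * (n - 2)
  end.

Definition lam_maj (b : nat) (n d : R) : R :=
  match b with
  | 2%nat => d ^ 2 + n
  | _ => d ^ 4 + (6 * n - 8) * d ^ 2 + 3 * n * (n - 2)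
  end.

Definition lam_den (b : nat) (n : R) : R :=
  match b with
  | 2%nat => n * (n - 1)
  | _ => n * (n - 1) * (n - 2) * (n - 3)
  end.

Definition lam_bound (n b s : nat) : R :=
  lam_maj b (INR n) (INR n - 2 * INR s) / lam_den b (INR n).

Definition pair_prod (n b h : nat) : R :=
  rprod (fun s => lam_bound n b s * lam_bound n b (h - s)) (seq 1 (h - 1)).

Lemma lamv_rprod n b l : lamv n b l = rprod (lam n b) l.
Proof. reflexivity. Qed.

Section ClosedForm.

Variables n b : nat.
Hypothesis Hb : (b = 2 \/ b = 4)%nat.
Hypothesis Hn : (4 <= n)%nat.

Lemma INR_n_gt_3 : 3 < INR n.
Proof. replace 3 with (INR 3) by (simpl; lra); apply lt_INR; lia. Qed.

Lemma lam_closed_form s :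
  lam n b s = lam_num b (INR n) (INR n - 2 * INR s) / lam_den b (INR n).
Proof.
  pose proof INR_n_gt_3.
  destruct Hb as [-> | ->]; unfold lam, lam_num, lam_den, C; simpl;
    field; repeat split; lra.
Qed.

Lemma lam_den_pos : 0 < lam_den b (INR n).
Proof.
  pose proof INR_n_gt_3.
  destruct Hb as [-> | ->]; unfold lam_den; repeat apply Rmult_lt_0_compat; lra.
Qed.

Lemma Rabs_lam_num_le d : Rabs (lam_num b (INR n) d) <= lam_maj b (INR n) d.
Proof.
  pose proof INR_n_gt_3.
  assert (0 <= d ^ 2) by apply pow2_ge_0.
  assert (0 <= d ^ 4) by (replace (d ^ 4) with ((d ^ 2) ^ 2) by ring; apply pow2_ge_0).
  assert (0 <= (6 * INR n - 8) * d ^ 2) by (apply Rmult_le_pos; lra).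
  assert (0 <= 3 * INR n * (INR n - 2)) by (apply Rmult_le_pos; lra).
  destruct Hb as [-> | ->]; unfold lam_num, lam_maj; apply Rabs_le; lra.
Qed.

Lemma Rabs_lam_le s : Rabs (lam n b s) <= lam_bound n b s.
Proof.
  pose proof lam_den_pos.
  rewrite lam_closed_form; unfold lam_bound, Rdiv.
  rewrite Rabs_mult, (Rabs_right (/ _)) by (left; apply Rinv_0_lt_compat; assumption).
  apply Rmult_le_compat_r; [left; apply Rinv_0_lt_compat; assumption | apply Rabs_lam_num_le].
Qed.

Lemma lam_bound_nonneg s : 0 <= lam_bound n b s.
Proof. apply Rle_trans with (Rabs (lam n b s)); [apply Rabs_pos | apply Rabs_lam_le]. Qed.

Lemma lam_reflect s : (s <= n)%nat -> lam n b (n - s) = lam n b s.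
Proof.
  intros Hs; rewrite !lam_closed_form, minus_INR by assumption.
  f_equal; destruct Hb as [-> | ->]; unfold lam_num; ring.
Qed.

Lemma lam_0 : lam n b 0 = 1.
Proof.
  pose proof INR_n_gt_3.
  rewrite lam_closed_form; destruct Hb as [-> | ->]; unfold lam_num, lam_den; simpl;
    field; repeat split; lra.
Qed.

Lemma Rabs_lam_middle m : n = (2 * m + 1)%nat -> (3 <= m)%nat -> Rabs (lam n b m) <= 1.
Proof.
  intros Hnm Hm.
  assert (HN : INR n = 2 * INR m + 1) by (rewrite Hnm, plus_INR, mult_INR; simpl; ring).
  assert (7 <= INR n) by (replace 7 with (INR 7) by (simpl; lra); apply le_INR; lia).
  pose proof lam_den_pos.
  apply Rle_trans with (lam_bound n b m); [apply Rabs_lam_le|].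
  unfold lam_bound; replace (INR n - 2 * INR m) with 1 by lra.
  apply Rmult_le_reg_r with (lam_den b (INR n)); [assumption|].
  unfold Rdiv; rewrite Rmult_assoc, Rinv_l, Rmult_1_l, Rmult_1_r by lra.
  destruct Hb as [-> | ->]; unfold lam_maj, lam_den in *; [nra|].
  assert (0 <= INR n * INR n * ((INR n - 2) * (INR n - 4))) by (apply Rmult_le_pos; nra).
  nra.
Qed.

Lemma rprod_lam_tail j : (j <= n)%nat ->
  rprod (lam n b) (seq (n - j) (S j)) = rprod (lam n b) (seq 1 j).
Proof.
  intros Hj.
  rewrite (rprod_seq_reflect _ n) by lia.
  replace (S n - (n - j) - S j)%nat with 0%nat by lia.
  rewrite (rprod_ext _ (lam n b))
    by (intros s Hs; apply in_seq in Hs; apply lam_reflect; lia).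
  change (lam n b 0 * rprod (lam n b) (seq 1 j) = rprod (lam n b) (seq 1 j)).
  rewrite lam_0; ring.
Qed.

Lemma lamv_del_half_even h : n = (2 * h)%nat -> (1 <= h)%nat ->
  lamv n b (del h (nvec n)) = rprod (lam n b) (seq 1 (h - 1)) ^ 2.
Proof.
  intros Hnh Hh; unfold nvec; rewrite lamv_rprod, del_seq by lia.
  replace (seq (S h) (1 + n - S h)) with (seq (n - (h - 1)) (S (h - 1))) by (f_equal; lia).
  rewrite rprod_app, rprod_lam_tail by lia; ring.
Qed.

Lemma Rabs_lamv_del_odd_le m L : n = (2 * m + 1)%nat -> (3 <= m)%nat ->
  L = del m (nvec n) \/ L = del (m + 1) (nvec n) \/ L = del (m + 1) (del m (nvec n)) ->
  Rabs (lamv n b L) <= rprod (lam n b) (seq 1 (m - 1)) ^ 2.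
Proof.
  intros Hnm Hm HL; unfold nvec in HL.
  set (Q := rprod (lam n b) (seq 1 (m - 1))).
  assert (Hinit : rprod (lam n b) (seq 1 m) = Q * lam n b m).
  { replace (seq 1 m) with (seq 1 (S (m - 1))) by (f_equal; lia).
    rewrite seq_S, rprod_app, rprod_single.
    replace (1 + (m - 1))%nat with m by lia; reflexivity. }
  assert (Htail : rprod (lam n b) (seq (m + 2) m) = Q).
  { replace (seq (m + 2) m) with (seq (n - (m - 1)) (S (m - 1))) by (f_equal; lia).
    apply rprod_lam_tail; lia. }
  assert (Hfactor : exists r, Rabs r <= 1 /\ lamv n b L = Q ^ 2 * r).
  { rewrite lamv_rprod; destruct HL as [-> | [-> | ->]].
    - exists (lam n b m); split; [now apply Rabs_lam_middle|].
      rewrite del_seq by lia.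
      replace (seq (S m) (1 + n - S m)) with (seq (n - m) (S m)) by (f_equal; lia).
      rewrite rprod_app, rprod_lam_tail, Hinit by lia; fold Q; ring.
    - exists (lam n b m); split; [now apply Rabs_lam_middle|].
      rewrite del_seq by lia.
      replace (seq 1 (m + 1 - 1)) with (seq 1 m) by (f_equal; lia).
      replace (seq (S (m + 1)) (1 + n - S (m + 1))) with (seq (m + 2) m) by (f_equal; lia).
      rewrite rprod_app, Hinit, Htail; ring.
    - exists 1; split; [rewrite Rabs_R1; lra|].
      rewrite del_seq, del_app, del_notin, del_seq
        by (try intros Hin; try apply in_seq in Hin; lia).
      replace (m + 1 - S m)%nat with 0%nat by lia.
      replace (seq (S (m + 1)) (S m + (1 + n - S m) - S (m + 1))) with (seq (m + 2) m)
        by (f_equal; lia).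
      cbn [seq app]; rewrite rprod_app, Htail; fold Q; ring. }
  destruct Hfactor as [r [Hr ->]].
  rewrite Rabs_mult, <- RPow_abs, pow2_abs.
  pose proof (pow2_ge_0 Q); pose proof (Rabs_pos r); nra.
Qed.

Lemma rprod_lam_sq_le h : (1 <= h)%nat ->
  rprod (lam n b) (seq 1 (h - 1)) ^ 2 <= pair_prod n b h.
Proof.
  intros Hh; unfold pair_prod; rewrite rprod_mult.
  replace (rprod (fun s => lam_bound n b (h - s)) (seq 1 (h - 1)))
    with (rprod (lam_bound n b) (seq 1 (h - 1))).
  2: { rewrite (rprod_seq_reflect _ h) by lia; do 2 f_equal; lia. }
  assert (Hle : Rabs (rprod (lam n b) (seq 1 (h - 1))) <= rprod (lam_bound n b) (seq 1 (h - 1))).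
  { rewrite Rabs_rprod; apply rprod_le; intros s _; split; [apply Rabs_pos | apply Rabs_lam_le]. }
  rewrite <- pow2_abs; pose proof (Rabs_pos (rprod (lam n b) (seq 1 (h - 1)))); nra.
Qed.

Lemma pair_prod_le_twelfth h par (G : R -> R) :
  (1 <= h)%nat -> INR n = 2 * INR h + par ->
  (forall x, G (x + 1) - G x
             = lam_maj b (INR n) (INR n - 2 * x) * lam_maj b (INR n) (par + 2 * x)) ->
  12 * (G (INR h) - G 1) <= (INR h - 1) * lam_den b (INR n) ^ 2 ->
  pair_prod n b h <= (1 / 12) ^ (h - 1).
Proof.
  intros Hh HN HG Hsum; unfold pair_prod.
  pose proof lam_den_pos as HD; set (D := lam_den b (INR n)) in *.
  assert (HD2 : 0 < D ^ 2) by (apply pow_lt; assumption).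
  set (g := fun x => lam_maj b (INR n) (INR n - 2 * x) * lam_maj b (INR n) (par + 2 * x)).
  assert (Hrsum : rsum (fun s => lam_bound n b s * lam_bound n b (h - s)) (seq 1 (h - 1))
                  = (G (INR h) - G 1) / D ^ 2).
  { rewrite (rsum_ext _ (fun s => g (INR s) / D ^ 2)).
    - rewrite rsum_div, (rsum_telescope g G) by (assumption || lra).
      replace (1 + (h - 1))%nat with h by lia; reflexivity.
    - intros s Hs; apply in_seq in Hs.
      unfold lam_bound, g; fold D; rewrite minus_INR by lia.
      replace (INR n - 2 * (INR h - INR s)) with (par + 2 * INR s) by lra.
      field; lra. }
  eapply Rle_trans.
  { apply (rprod_le_pow_exp (1 / 12)); [lra|].
    intros s _; apply Rmult_le_pos; apply lam_bound_nonneg. }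
  rewrite length_seq, Hrsum.
  rewrite <- (Rmult_1_r ((1 / 12) ^ (h - 1))) at 2.
  apply Rmult_le_compat_l; [apply pow_le; lra|].
  replace ((G (INR h) - G 1) / D ^ 2 / (1 / 12) - INR (h - 1))
    with ((12 * (G (INR h) - G 1) - (INR h - 1) * D ^ 2) / D ^ 2)
    by (rewrite minus_INR by lia; simpl; field; lra).
  apply Rle_trans with (exp 0); [apply exp_le | right; apply exp_0].
  apply Rmult_le_reg_r with (D ^ 2); [assumption|].
  unfold Rdiv; rewrite Rmult_assoc, Rinv_l, Rmult_0_l; lra.
Qed.

End ClosedForm.

Fixpoint horner (cs : list R) (t : R) : R :=
  match cs with
  | [] => 0
  | c :: cs' => c + t * horner cs' t
  end.

Lemma horner_nonneg cs t : Forall (Rle 0) cs -> 0 <= t -> 0 <= horner cs t.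
Proof.
  intros Hcs Ht; induction Hcs as [|c cs Hc _ IH]; simpl; [lra|].
  apply Rplus_le_le_0_compat; [assumption | apply Rmult_le_pos; assumption].
Qed.

Lemma le_of_horner_certificate x y cs t :
  y - x = horner cs t -> Forall (Rle 0) cs -> 0 <= t -> x <= y.
Proof. intros Heq Hcs Ht; pose proof (horner_nonneg cs t Hcs Ht); lra. Qed.

(* For [n = 2 h + par], [antidiff_b_par h] is an antidifference in [x] of the summand
   [lam_maj b n (n - 2 x) * lam_maj b n (par + 2 x)] of [pair_prod_le_twelfth] (Faulhaber),
   and [cert_b_par] lists the coefficients of
   [(h - 1) * lam_den b n ^ 2 - 12 * (antidiff h h - antidiff h 1)] in powers of [h - 12]. *)
Definition antidiff_2_even (h x : R) : R :=
  (-8/15)*x + (16/3)*x^3 + (-8)*x^4 + (16/5)*x^5 + (8/3)*h*x + (-16)*h*x^2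
  + (64/3)*h*x^3 + (-8)*h*x^4 + (44/3)*h^2*x + (-16)*h^2*x^2 + (16/3)*h^2*x^3
  + (8)*h^3*x.

Definition cert_2_even : list R :=
  [517440; 1807232/5; 85404; 9284; 480; 48/5].

Definition antidiff_4_even (h x : R) : R :=
  (-1408/21)*x + (5120/9)*x^3 + (-512)*x^4 + (-1280/3)*x^5 + (512)*x^6 + (512/21)*x^7
  + (-128)*x^8 + (256/9)*x^9 + (9792/35)*h*x + (-3712/3)*h*x^2 + (-128)*h*x^3
  + (8384/3)*h*x^4 + (-7296/5)*h*x^5 + (-2560/3)*h*x^6 + (5120/7)*h*x^7 + (-128)*h*x^8
  + (46736/105)*h^2*x + (2176)*h^2*x^2 + (-12928/3)*h^2*x^3 + (256)*h^2*x^4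
  + (14464/5)*h^2*x^5 + (-1536)*h^2*x^6 + (1536/7)*h^2*x^7 + (-7776/5)*h^3*x
  + (5248/3)*h^3*x^2 + (2432)*h^3*x^3 + (-11840/3)*h^3*x^4 + (7936/5)*h^3*x^5
  + (-512/3)*h^3*x^6 + (-2128/15)*h^4*x + (-2432)*h^4*x^2 + (7808/3)*h^4*x^3
  + (-896)*h^4*x^4 + (256/5)*h^4*x^5 + (896)*h^5*x + (-768)*h^5*x^2 + (256)*h^5*x^3
  + (192)*h^6*x.

Definition cert_4_even : list R :=
  [554410534656; 16462709942912/35; 6141528831696/35; 3974945389808/105; 26065884688/5;
  2378906256/5; 144026752/5; 39076224/35; 880384/35; 26368/105].

Definition antidiff_2_odd (h x : R) : R :=
  (52/15)*x + (16/3)*x^3 + (-8)*x^4 + (16/5)*x^5 + (16)*h*x + (-8)*h*x^2 + (16)*h*x^3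
  + (-8)*h*x^4 + (68/3)*h^2*x + (-8)*h^2*x^2 + (16/3)*h^2*x^3 + (8)*h^3*x.

Definition cert_2_odd : list R :=
  [136752; 1327952/5; 77372; 9060; 480; 48/5].

Definition antidiff_4_odd (h x : R) : R :=
  (-3184/105)*x + (64)*x^2 + (1280/9)*x^3 + (-64)*x^4 + (-5248/15)*x^5 + (256)*x^6
  + (2048/21)*x^7 + (-128)*x^8 + (256/9)*x^9 + (-1248/7)*h*x + (-64/3)*h*x^2
  + (-384)*h*x^3 + (3584/3)*h*x^4 + (-384)*h*x^5 + (-2560/3)*h*x^6 + (4608/7)*h*x^7
  + (-128)*h*x^8 + (-9872/21)*h^2*x + (1024)*h^2*x^2 + (-2560/3)*h^2*x^3
  + (-1280)*h^2*x^4 + (2432)*h^2*x^5 + (-1280)*h^2*x^6 + (1536/7)*h^2*x^7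
  + (160/3)*h^3*x + (448/3)*h^3*x^2 + (8192/3)*h^3*x^3 + (-9920/3)*h^3*x^4
  + (1280)*h^3*x^5 + (-512/3)*h^3*x^6 + (26672/15)*h^4*x + (-1344)*h^4*x^2
  + (6272/3)*h^4*x^3 + (-768)*h^4*x^4 + (256/5)*h^4*x^5 + (1280)*h^5*x + (-384)*h^5*x^2
  + (256)*h^5*x^3 + (192)*h^6*x.

Definition cert_4_odd : list R :=
  [738880198848; 615058324544; 7833439209808/35; 4925117289968/105; 31281520016/5;
  2759250192/5; 161202816/5; 6022272/5; 914688/35; 26368/105].

Ltac nonneg_coeffs := repeat (apply Forall_cons; [lra|]); apply Forall_nil.

Lemma pair_prod_even_le b h : (b = 2 \/ b = 4)%nat -> (12 <= h)%nat ->
  pair_prod (2 * h) b h <= (1 / 12) ^ (h - 1).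
Proof.
  intros Hb Hh.
  assert (HN : INR (2 * h) = 2 * INR h + 0) by (rewrite mult_INR; simpl; ring).
  assert (12 <= INR h) by (replace 12 with (INR 12) by (simpl; lra); apply le_INR; lia).
  destruct Hb as [-> | ->].
  - apply (pair_prod_le_twelfth (2 * h) 2 ltac:(auto) ltac:(lia) h 0 (antidiff_2_even (INR h)));
      rewrite ?HN; [lia | reflexivity | intros x; unfold antidiff_2_even, lam_maj; field |].
    apply (le_of_horner_certificate _ _ cert_2_even (INR h - 12)); [| nonneg_coeffs | lra].
    unfold antidiff_2_even, lam_den, cert_2_even; cbn [horner]; field.
  - apply (pair_prod_le_twelfth (2 * h) 4 ltac:(auto) ltac:(lia) h 0 (antidiff_4_even (INR h)));
      rewrite ?HN; [lia | reflexivity | intros x; unfold antidiff_4_even, lam_maj; field |].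
    apply (le_of_horner_certificate _ _ cert_4_even (INR h - 12)); [| nonneg_coeffs | lra].
    unfold antidiff_4_even, lam_den, cert_4_even; cbn [horner]; field.
Qed.

Lemma pair_prod_odd_le b h : (b = 2 \/ b = 4)%nat -> (12 <= h)%nat ->
  pair_prod (2 * h + 1) b h <= (1 / 12) ^ (h - 1).
Proof.
  intros Hb Hh.
  assert (HN : INR (2 * h + 1) = 2 * INR h + 1) by (rewrite plus_INR, mult_INR; simpl; ring).
  assert (12 <= INR h) by (replace 12 with (INR 12) by (simpl; lra); apply le_INR; lia).
  destruct Hb as [-> | ->].
  - apply (pair_prod_le_twelfth (2 * h + 1) 2 ltac:(auto) ltac:(lia) h 1 (antidiff_2_odd (INR h)));
      rewrite ?HN; [lia | reflexivity | intros x; unfold antidiff_2_odd, lam_maj; field |].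
    apply (le_of_horner_certificate _ _ cert_2_odd (INR h - 12)); [| nonneg_coeffs | lra].
    unfold antidiff_2_odd, lam_den, cert_2_odd; cbn [horner]; field.
  - apply (pair_prod_le_twelfth (2 * h + 1) 4 ltac:(auto) ltac:(lia) h 1 (antidiff_4_odd (INR h)));
      rewrite ?HN; [lia | reflexivity | intros x; unfold antidiff_4_odd, lam_maj; field |].
    apply (le_of_horner_certificate _ _ cert_4_odd (INR h - 12)); [| nonneg_coeffs | lra].
    unfold antidiff_4_odd, lam_den, cert_4_odd; cbn [horner]; field.
Qed.

Lemma exp_INR_mult k x : exp (INR k * x) = exp x ^ k.
Proof.
  rewrite <- Rpower_pow by apply exp_pos.
  unfold Rpower; rewrite ln_exp; reflexivity.
Qed.

(* [e^(-1) = (e^(-1/64))^64 >= (63/64)^64 >= 4/11]. *)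
Lemma pow_4_11_le_exp n : (4 / 11) ^ n <= exp (- INR n).
Proof.
  replace (- INR n) with (INR n * -1) by ring; rewrite exp_INR_mult.
  apply pow_incr; split; [lra|].
  replace (-1) with (INR 64 * (-1 / 64)) by (simpl; lra); rewrite exp_INR_mult.
  pose proof (exp_ineq1_le (-1 / 64)).
  apply Rle_trans with ((63 / 64) ^ 64); [lra | apply pow_incr; lra].
Qed.

Lemma twelfth_pow_le_exp h n : (12 <= h)%nat -> (n <= 2 * h + 1)%nat ->
  (1 / 12) ^ (h - 1) <= / 2 * exp (- INR n).
Proof.
  intros Hh Hn.
  assert (Hgeom : 2 * (1 / 12) ^ (h - 1) <= (4 / 11) ^ (2 * h + 1)).
  { replace h with (12 + (h - 12))%nat by lia; generalize (h - 12)%nat as k; intros k.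
    replace (12 + k - 1)%nat with (11 + k)%nat by lia.
    replace (2 * (12 + k) + 1)%nat with (25 + 2 * k)%nat by lia.
    induction k as [|k IH]; [simpl; lra|].
    replace (11 + S k)%nat with (S (11 + k)) by lia.
    replace (25 + 2 * S k)%nat with (S (S (25 + 2 * k))) by lia.
    cbn [pow]; assert (0 <= (4 / 11) ^ (25 + 2 * k)) by (apply pow_le; lra); lra. }
  assert (exp (- INR (2 * h + 1)) <= exp (- INR n))
    by (apply exp_le, Ropp_le_contravar, le_INR, Hn).
  pose proof (pow_4_11_le_exp (2 * h + 1)); lra.
Qed.

Definition lam_num_Z (b n s : nat) : Z :=
  let N := Z.of_nat n in
  let d := (N - 2 * Z.of_nat s)%Z in
  match b with
  | 2%nat => (d * d - N)%Z
  | _ => (d * d * d * d - (6 * N - 8) * d * d + 3 * N * (N - 2))%Z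
  end.

Definition lam_den_Z (b n : nat) : Z :=
  let N := Z.of_nat n in
  match b with
  | 2%nat => (N * (N - 1))%Z
  | _ => (N * (N - 1) * (N - 2) * (N - 3))%Z
  end.

Definition lamv_num_Z (b n : nat) (L : list nat) : Z :=
  fold_right Z.mul 1%Z (map (lam_num_Z b n) L).

(* [2 |lamv n b L| <= (4/11)^n], with denominators cleared. *)
Definition lamv_small_check (b n : nat) (L : list nat) : bool :=
  (Z.abs (lamv_num_Z b n L) * 11 ^ Z.of_nat n * 2
   <=? 4 ^ Z.of_nat n * lam_den_Z b n ^ Z.of_nat (length L))%Z.

Lemma IZR_lam_num_Z b n s : (b = 2 \/ b = 4)%nat ->
  IZR (lam_num_Z b n s) = lam_num b (INR n) (INR n - 2 * INR s).
Proof.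
  intros [-> | ->]; unfold lam_num_Z, lam_num; rewrite !INR_IZR_INZ;
    repeat (rewrite minus_IZR || rewrite mult_IZR || rewrite plus_IZR); ring.
Qed.

Lemma IZR_lam_den_Z b n : (b = 2 \/ b = 4)%nat -> IZR (lam_den_Z b n) = lam_den b (INR n).
Proof.
  intros [-> | ->]; unfold lam_den_Z, lam_den; rewrite !INR_IZR_INZ;
    repeat (rewrite minus_IZR || rewrite mult_IZR || rewrite plus_IZR); ring.
Qed.

Lemma IZR_lamv_num_Z b n L : IZR (lamv_num_Z b n L) = rprod (fun s => IZR (lam_num_Z b n s)) L.
Proof.
  unfold lamv_num_Z, rprod; induction L as [|s L IH]; simpl; [reflexivity|].
  rewrite mult_IZR, IH; reflexivity.
Qed.

Lemma lamv_small_check_sound b n L : (b = 2 \/ b = 4)%nat -> (4 <= n)%nat ->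
  lamv_small_check b n L = true -> Rabs (lamv n b L) <= / 2 * exp (- INR n).
Proof.
  intros Hb Hn Hcheck; unfold lamv_small_check in Hcheck.
  apply Z.leb_le, IZR_le in Hcheck.
  rewrite !mult_IZR, <- !pow_IZR, abs_IZR, IZR_lam_den_Z, IZR_lamv_num_Z in Hcheck by assumption.
  pose proof (lam_den_pos n b Hb Hn) as HD; set (D := lam_den b (INR n)) in *.
  rewrite lamv_rprod, (rprod_ext _ (fun s => IZR (lam_num_Z b n s) / D)).
  2: { intros s _; rewrite lam_closed_form, IZR_lam_num_Z; auto. }
  rewrite rprod_div by lra.
  set (A := rprod (fun s => IZR (lam_num_Z b n s)) L) in *; set (k := length L) in *.
  assert (HDk : 0 < D ^ k) by (apply pow_lt; assumption).
  assert (H11 : 0 < 11 ^ n) by (apply pow_lt; lra).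
  apply Rle_trans with (/ 2 * (4 / 11) ^ n).
  2: { apply Rmult_le_compat_l; [lra | apply pow_4_11_le_exp]. }
  unfold Rdiv; rewrite Rabs_mult, (Rabs_right (/ D ^ k))
    by (left; apply Rinv_0_lt_compat; assumption).
  apply Rmult_le_reg_r with (D ^ k * 11 ^ n * 2); [repeat apply Rmult_lt_0_compat; lra|].
  replace (Rabs A * / D ^ k * (D ^ k * 11 ^ n * 2)) with (Rabs A * 11 ^ n * 2) by (field; lra).
  replace (/ 2 * (4 * / 11) ^ n * (D ^ k * 11 ^ n * 2)) with ((4 * / 11 * 11) ^ n * D ^ k)
    by (rewrite Rpow_mult_distr; field).
  replace (4 * / 11 * 11) with 4 by field; lra.
Qed.

Definition even_case_checked (h : nat) : bool :=
  let n := (2 * h)%nat in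
  andb (lamv_small_check 2 n (del h (nvec n))) (lamv_small_check 4 n (del h (nvec n))).

Definition odd_cases_checked (m : nat) : bool :=
  let n := (2 * m + 1)%nat in
  forallb (fun L => andb (lamv_small_check 2 n L) (lamv_small_check 4 n L))
    [del m (nvec n); del (m + 1) (nvec n); del (m + 1) (del m (nvec n))].

Lemma small_cases_checked :
  forallb even_case_checked (seq 3 9) = true /\ forallb odd_cases_checked (seq 3 9) = true.
Proof. split; vm_compute; reflexivity. Qed.

Lemma Rabs_lamv_even_le b h : (b = 2 \/ b = 4)%nat -> (3 <= h)%nat ->
  Rabs (lamv (2 * h) b (del h (nvec (2 * h)))) <= / 2 * exp (- INR (2 * h)).
Proof.
  intros Hb Hh; destruct (le_lt_dec 12 h) as [Hlarge | Hsmall].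
  - rewrite (lamv_del_half_even (2 * h) b Hb ltac:(lia) h), Rabs_right
      by (lia || apply Rle_ge, pow2_ge_0).
    eapply Rle_trans; [apply rprod_lam_sq_le; auto; lia|].
    eapply Rle_trans; [apply pair_prod_even_le; auto|].
    apply twelfth_pow_le_exp; lia.
  - destruct small_cases_checked as [Heven _].
    rewrite forallb_forall in Heven; specialize (Heven h ltac:(apply in_seq; lia)).
    apply Bool.andb_true_iff in Heven as [H2 H4].
    destruct Hb as [-> | ->]; apply lamv_small_check_sound; auto; lia.
Qed.

Lemma Rabs_lamv_odd_le b m L : (b = 2 \/ b = 4)%nat -> (3 <= m)%nat ->
  L = del m (nvec (2 * m + 1)) \/ L = del (m + 1) (nvec (2 * m + 1))
  \/ L = del (m + 1) (del m (nvec (2 * m + 1))) ->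
  Rabs (lamv (2 * m + 1) b L) <= / 2 * exp (- INR (2 * m + 1)).
Proof.
  intros Hb Hm HL; destruct (le_lt_dec 12 m) as [Hlarge | Hsmall].
  - eapply Rle_trans; [apply (Rabs_lamv_del_odd_le (2 * m + 1) b Hb ltac:(lia) m); auto|].
    eapply Rle_trans; [apply rprod_lam_sq_le; auto; lia|].
    eapply Rle_trans; [apply pair_prod_odd_le; auto|].
    apply twelfth_pow_le_exp; lia.
  - destruct small_cases_checked as [_ Hodd].
    rewrite forallb_forall in Hodd; specialize (Hodd m ltac:(apply in_seq; lia)).
    unfold odd_cases_checked in Hodd; rewrite forallb_forall in Hodd.
    assert (HL' : andb (lamv_small_check 2 (2 * m + 1) L) (lamv_small_check 4 (2 * m + 1) L) = true)
      by (apply Hodd; destruct HL as [-> | [-> | ->]]; simpl; auto).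
    apply Bool.andb_true_iff in HL' as [H2 H4].
    destruct Hb as [-> | ->]; apply lamv_small_check_sound; auto; lia.
Qed.

Lemma Rabs_half_sum_le a b E : Rabs a <= E -> Rabs b <= E -> Rabs ((a + b) / 2) <= E.
Proof. unfold Rabs; repeat destruct Rcase_abs; intros; lra. Qed.

Theorem lemma4p5 :
  (forall n : nat, (6 <= n)%nat -> Nat.Even n ->
     let s := del (n / 2) (nvec n) in
     Rabs (lamv n 2 s) <= exp (- INR n) /\
     Rabs (lamv n 4 s) <= / 2 * exp (- INR n)) /\
  (forall m : nat, (7 <= 2 * m + 1)%nat ->
     forall s : list nat,
       s = del m (nvec (2 * m + 1)) \/
       s = del (m + 1) (nvec (2 * m + 1)) \/
       s = del (m + 1) (del m (nvec (2 * m + 1))) ->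
     Rabs (lamv (2 * m + 1) 2 s) <= exp (- INR (2 * m + 1)) /\
     Rabs (lamv (2 * m + 1) 4 s) <= / 2 * exp (- INR (2 * m + 1))) /\
  (forall m : nat, (7 <= 2 * m + 1)%nat ->
     Rabs (lambar (2 * m + 1) 2 m) <= exp (- INR (2 * m + 1)) /\
     Rabs (lambar (2 * m + 1) 4 m) <= / 2 * exp (- INR (2 * m + 1))).
Proof.
  assert (Hhalf : forall x n, x <= / 2 * exp (- INR n) -> x <= exp (- INR n))
    by (intros x n; pose proof (exp_pos (- INR n)); lra).
  split; [|split].
  - intros n Hn [h ->] s; unfold s.
    replace (2 * h / 2)%nat with h by (rewrite Nat.mul_comm, Nat.div_mul; lia).
    split; [apply Hhalf|]; apply Rabs_lamv_even_le; auto; lia.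
  - intros m Hm L HL; split; [apply Hhalf|]; apply Rabs_lamv_odd_le; auto; lia.
  - intros m Hm; unfold lambar.
    split; [apply Hhalf|]; apply Rabs_half_sum_le; apply Rabs_lamv_odd_le; auto; lia.
Qed.
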